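(* Let $H$ be a Hilbert space with norm $\|\cdot\|$ and let $\tau>0$. There is a constant $c_{12}\ge 1$, independent of $\tau$, $N$ and the sequence, such that for every sequence $(u^n)_{n\ge 0}$ in $H$ and every $N\ge 2$ the seminorms \[ |(u^n)|_{\tau,1} = \Big(\tau \sum_{n=2}^N \|\dot u^n\|^2 + \tau\|d_t u^1\|^2\Big)^{1/2},\qquad |(u^n)|_{\tau,2} = \Big(\tau\sum_{n=1}^N \|d_t u^n\|^2\Big)^{1/2} \] satisfy $c_{12}^{-1}|(u^n)|_{\tau,1} \le |(u^n)|_{\tau,2} \le c_{12}|(u^n)|_{\tau,1}$.
   Context: For a sequence $(u^n)$ and step size $\tau>0$: $d_t u^n = (u^n-u^{n-1})/\tau$ for $n\ge 1$, and $\dot u^n = \frac{1}{2\tau}(3u^n - 4u^{n-1} + u^{n-2})$ for $n\ge 2$ (the BDF2 difference quotient). *)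

From HB Require Import structures.
From mathcomp Require Import all_boot all_order all_algebra.
From mathcomp Require Import all_classical all_reals all_analysis.
Set Implicit Arguments. Unset Strict Implicit. Unset Printing Implicit Defensive.
Import Order.TTheory GRing.Theory Num.Theory.
Import numFieldNormedType.Exports.
Local Open Scope ring_scope.

Definition hilbert_inner (R : realType) (V : completeNormedModType R)
  (ip : V -> V -> R) : Prop :=
  [/\ (forall x y : V, ip x y = ip y x),
      (forall (a : R) (x y z : V), ip (a *: x + y) z = a * ip x z + ip y z),
      (forall x : V, 0 <= ip x x) &
      (forall x : V, `|x| = Num.sqrt (ip x x))].

Definition dt (R : realType) (V : normedModType R) (tau : R) (u : nat -> V)
  (n : nat) : V := tau^-1 *: (u n - u n.-1).

Definition bdf2 (R : realType) (V : normedModType R) (tau : R) (u : nat -> V)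
  (n : nat) : V := (2 * tau)^-1 *: (3%:R *: u n - 4%:R *: u n.-1 + u n.-2).

Definition seminorm1 (R : realType) (V : normedModType R) (tau : R)
  (N : nat) (u : nat -> V) : R :=
  Num.sqrt (tau * (\sum_(2 <= n < N.+1) `|bdf2 tau u n| ^+ 2)
            + tau * `|dt tau u 1| ^+ 2).

Definition seminorm2 (R : realType) (V : normedModType R) (tau : R)
  (N : nat) (u : nat -> V) : R :=
  Num.sqrt (tau * \sum_(1 <= n < N.+1) `|dt tau u n| ^+ 2).

From HB Require Import structures.
From mathcomp Require Import all_boot all_order all_algebra.
From mathcomp Require Import all_classical all_reals all_analysis.
From mathcomp Require Import lra.
Import Order.TTheory GRing.Theory Num.Theory.
Import numFieldNormedType.Exports.
Local Open Scope ring_scope.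

(* Since 2 \dot u^n = 3 d_t u^n - d_t u^{n-1}, the triangle inequality and
   Young's inequality give the pointwise bounds
     |\dot u^n|^2 <= 3 |d_t u^n|^2 + |d_t u^{n-1}|^2,
     3 |d_t u^n|^2 <= 2 |\dot u^n|^2 + |d_t u^{n-1}|^2.
   Summed over n >= 2, the shifted sum of |d_t u^{n-1}|^2 is at most the full
   sum of |d_t u^n|^2, so the two squared seminorms agree up to a factor 4. *)

Section SumBounds.
Variables (R : realType) (a b : nat -> R) (N : nat).
Hypotheses (a_ge0 : forall n, 0 <= a n) (N_gt0 : (0 < N)%N).

Let sum_from2 : \sum_(2 <= n < N.+1) a n = \sum_(1 <= n < N.+1) a n - a 1%N.
Proof. by rewrite [in RHS]big_ltn // addrC addKr. Qed.

Let sum_from2_pred :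
  \sum_(2 <= n < N.+1) a n.-1 = \sum_(1 <= n < N.+1) a n - a N.
Proof. by rewrite big_add1 /= [in RHS]big_nat_recr //= addrK. Qed.

Lemma sum_le_from_recurrence_upper :
  (forall n, (2 <= n)%N -> b n <= 3%:R * a n + a n.-1) ->
  \sum_(2 <= n < N.+1) b n + a 1%N <= 4%:R * \sum_(1 <= n < N.+1) a n.
Proof.
move=> hb.
have sum_hb : \sum_(2 <= n < N.+1) b n
    <= 3%:R * \sum_(2 <= n < N.+1) a n + \sum_(2 <= n < N.+1) a n.-1.
  rewrite mulr_sumr -big_split /=.
  by apply: ler_sum_nat => n /andP[n_ge2 _]; exact: hb.
move: sum_hb; rewrite sum_from2 sum_from2_pred.
have := a_ge0 1%N; have := a_ge0 N; lra.
Qed.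

Lemma sum_le_from_recurrence_lower :
  (forall n, 0 <= b n) ->
  (forall n, (2 <= n)%N -> 3%:R * a n <= 2%:R * b n + a n.-1) ->
  2%:R * \sum_(1 <= n < N.+1) a n <= 3%:R * (\sum_(2 <= n < N.+1) b n + a 1%N).
Proof.
move=> b_ge0 ha.
have sum_ha : 3%:R * \sum_(2 <= n < N.+1) a n
    <= 2%:R * \sum_(2 <= n < N.+1) b n + \sum_(2 <= n < N.+1) a n.-1.
  rewrite !mulr_sumr -big_split /=.
  by apply: ler_sum_nat => n /andP[n_ge2 _]; exact: ha.
have sum_b_ge0 : 0 <= \sum_(2 <= n < N.+1) b n by exact: sumr_ge0.
move: sum_ha; rewrite sum_from2 sum_from2_pred.
have := a_ge0 1%N; have := a_ge0 N; lra.
Qed.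

End SumBounds.

Lemma sqrtr_le_mul (R : rcfType) (x y c : R) :
  0 <= c -> x <= c ^+ 2 * y -> Num.sqrt x <= c * Num.sqrt y.
Proof.
move=> c_ge0 xy; rewrite -[c in c * _]ger0_norm // -sqrtr_sqr -sqrtrM ?sqr_ge0 //.
exact: ler_wsqrtr.
Qed.

Section BDF2.
Variables (R : realType) (V : normedModType R) (tau : R) (u : nat -> V).

Lemma bdf2_dt n : bdf2 tau u n = 2^-1 *: (3%:R *: dt tau u n - dt tau u n.-1).
Proof.
have split4 (p q r : V) : 3%:R *: p - 4%:R *: q + r = 3%:R *: (p - q) - (q - r).
  by rewrite !scaler_nat (mulrSr q 3) mulrnBl opprD opprB !addrA (addrAC _ (- q)).
by rewrite /bdf2 /dt split4 invfM -scalerA scalerBr !scalerA mulrC.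
Qed.

Lemma norm_bdf2_sqr_le n :
  `|bdf2 tau u n| ^+ 2 <= 3%:R * `|dt tau u n| ^+ 2 + `|dt tau u n.-1| ^+ 2.
Proof.
have tri : 2 * `|bdf2 tau u n| <= 3%:R * `|dt tau u n| + `|dt tau u n.-1|.
  rewrite bdf2_dt normrZ ger0_norm ?invr_ge0 ?ler0n // mulrA mulfV ?pnatr_eq0 //.
  by rewrite mul1r (le_trans (ler_normB _ _)) // normrZ ger0_norm ?ler0n.
have := normr_ge0 (bdf2 tau u n); have := normr_ge0 (dt tau u n).
have := normr_ge0 (dt tau u n.-1).
have := sqr_ge0 (`|dt tau u n| - `|dt tau u n.-1|); nra.
Qed.

Lemma norm_dt_sqr_le n :
  3%:R * `|dt tau u n| ^+ 2 <= 2%:R * `|bdf2 tau u n| ^+ 2 + `|dt tau u n.-1| ^+ 2.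
Proof.
have dtE : 3%:R *: dt tau u n = 2%:R *: bdf2 tau u n + dt tau u n.-1.
  by rewrite bdf2_dt [in RHS]scalerA mulfV ?pnatr_eq0 // scale1r subrK.
have tri : 3%:R * `|dt tau u n| <= 2%:R * `|bdf2 tau u n| + `|dt tau u n.-1|.
  rewrite -[3%:R]ger0_norm ?ler0n // -normrZ dtE (le_trans (ler_normD _ _)) //.
  by rewrite normrZ ger0_norm ?ler0n.
have := normr_ge0 (bdf2 tau u n); have := normr_ge0 (dt tau u n).
have := normr_ge0 (dt tau u n.-1).
have := sqr_ge0 (`|bdf2 tau u n| - `|dt tau u n.-1|); nra.
Qed.

Hypothesis tau_ge0 : 0 <= tau.
Variable N : nat.
Hypothesis N_gt0 : (0 < N)%N.

Let seminorm1E : seminorm1 tau N u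
  = Num.sqrt (tau * (\sum_(2 <= n < N.+1) `|bdf2 tau u n| ^+ 2 + `|dt tau u 1| ^+ 2)).
Proof. by rewrite /seminorm1 mulrDr. Qed.

Lemma seminorm1_le : seminorm1 tau N u <= 2 * seminorm2 tau N u.
Proof.
rewrite seminorm1E /seminorm2; apply: sqrtr_le_mul => //.
rewrite mulrCA ler_wpM2l //.
have := sum_le_from_recurrence_upper _ _ _ _ (fun n => sqr_ge0 `|dt tau u n|)
  N_gt0 (fun n _ => norm_bdf2_sqr_le n).
lra.
Qed.

Lemma seminorm2_le : seminorm2 tau N u <= 2 * seminorm1 tau N u.
Proof.
rewrite seminorm1E /seminorm2; apply: sqrtr_le_mul => //.
rewrite mulrCA ler_wpM2l //.
have := sum_le_from_recurrence_lower _ _ _ _ (fun n => sqr_ge0 `|dt tau u n|) N_gt0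
  (fun n => sqr_ge0 `|bdf2 tau u n|) (fun n _ => norm_dt_sqr_le n).
have : 0 <= \sum_(2 <= n < N.+1) `|bdf2 tau u n| ^+ 2 + `|dt tau u 1| ^+ 2.
  by rewrite addr_ge0 ?sqr_ge0 ?sumr_ge0 // => n _; exact: sqr_ge0.
lra.
Qed.

End BDF2.

Theorem lemma2p1 (R : realType) (H : completeNormedModType R)
  (ip : H -> H -> R) (Hip : hilbert_inner ip) :
  exists c12 : R, 1 <= c12 /\
    forall (tau : R), 0 < tau ->
    forall (N : nat), (2 <= N)%N ->
    forall (u : nat -> H),
      c12^-1 * seminorm1 tau N u <= seminorm2 tau N u /\
      seminorm2 tau N u <= c12 * seminorm1 tau N u.
Proof.
exists 2; split; first by rewrite ler1n.
move=> tau /ltW tau_ge0 N /ltnW N_gt0 u; split.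
- by rewrite ler_pdivrMl ?ltr0n // seminorm1_le.
- exact: seminorm2_le.
Qed.
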